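(* Let $p=(p_k)_{k\ge0}$ and $q=(q_k)_{k\ge0}$ be unimodal probability distributions on $\mathbb{N}_0$, and let $X\sim p$, $Y\sim q$. Then $X\le_{wd}Y$ if and only if $X\le_{rand}Y$, i.e. if and only if $\sum_{i=0}^{m}p_{[i]}\ge\sum_{i=0}^{m}q_{[i]}$ for all $m\in\mathbb{N}_0$.
   Context: For a real random variable $X$, its Lévy concentration function is $Q_X(\varepsilon)=\sup_{x_0\in\mathbb{R}}\Pr\{X\in[x_0,x_0+\varepsilon]\}$, $\varepsilon>0$. For random variables $X,Y$, write $X\le_{wd}Y$ if $Q_X(\varepsilon)\ge Q_Y(\varepsilon)$ for all $\varepsilon>0$. A distribution $p$ on the integers is unimodal if there exists an integer $M$ with $p_k\ge p_{k-1}$ for all $k\le M$ and $p_{k+1}\le p_k$ for all $k\ge M$. For a probability vector $p$, $p_{[0]}\ge p_{[1]}\ge\cdots$ denote its entries in decreasing order. $X\le_{rand}Y$ ($X$ less random than $Y$) means $q$ is majorized by $p$: $\sum_{i=0}^{m}p_{[i]}\ge\sum_{i=0}^{m}q_{[i]}$ for all $m$ (both sum to $1$). *)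

From Stdlib Require Import Reals.
From Coquelicot Require Import Coquelicot.
Open Scope R_scope.

Definition prob_dist (p : nat -> R) : Prop :=
  (forall k, 0 <= p k) /\ is_series p 1.

(* Unimodality of p on N_0 (p extended by 0 to the negative integers):
   there is a mode M with p nondecreasing up to M and nonincreasing from M. *)
Definition unimodal (p : nat -> R) : Prop :=
  exists M : nat,
    (forall k : nat, (0 < k)%nat -> (k <= M)%nat -> p (k - 1)%nat <= p k) /\
    (forall k : nat, (M <= k)%nat -> p (S k) <= p k).

Definition prob_interval (p : nat -> R) (a b : R) : R :=
  Series (fun k => if Rle_dec a (INR k) then
                     if Rle_dec (INR k) b then p k else 0
                   else 0).

Definition concentration (p : nat -> R) (eps : R) : Rbar :=
  Lub_Rbar (fun y => exists x0 : R, y = prob_interval p x0 (x0 + eps)).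

Definition le_wd (p q : nat -> R) : Prop :=
  forall eps : R, 0 < eps -> Rbar_le (concentration q eps) (concentration p eps).

(* r is the decreasing rearrangement (p_[0] >= p_[1] >= ...) of p:
   r is nonincreasing, r lists entries of p at distinct positions, and every
   entry of p not listed is at most every listed value. *)
Definition decr_rearr (p r : nat -> R) : Prop :=
  (forall i, r (S i) <= r i) /\
  exists sigma : nat -> nat,
    (forall i j, sigma i = sigma j -> i = j) /\
    (forall i, r i = p (sigma i)) /\
    (forall k, (forall i, sigma i <> k) -> forall i, p k <= r i).

Definition le_rand (p q : nat -> R) : Prop :=
  forall rp rq : nat -> R, decr_rearr p rp -> decr_rearr q rq ->
    forall m : nat, sum_f_R0 rq m <= sum_f_R0 rp m.

(* For a unimodal p, growing a window of consecutive integers from the mode, each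
   time by the larger of its two neighbours, enumerates p in decreasing order; so the
   sum of the m + 1 largest probabilities is carried by m + 1 consecutive integers.
   Conversely an interval of length eps in [m, m + 1) contains at most m + 1
   consecutive integers, and no m + 1 distinct probabilities exceed the m + 1 largest.
   Hence Q_X(eps) is the sum of the m + 1 largest probabilities, and the two orders
   compare the same quantities. *)

From Stdlib Require Import Reals Lra Lia List FinFun Classical.
From Coquelicot Require Import Coquelicot.
Open Scope R_scope.

Definition sumR (l : list R) : R := fold_right Rplus 0 l.

Lemma sumR_app l1 l2 : sumR (l1 ++ l2) = sumR l1 + sumR l2.
Proof. induction l1 as [|x l1 IH]; simpl; [|rewrite IH]; lra. Qed.

Lemma sumR_map_ge0 (f : nat -> R) l : (forall k, 0 <= f k) -> 0 <= sumR (map f l).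
Proof. intro Hf; induction l as [|x l IH]; simpl; [lra|]. specialize (Hf x); lra. Qed.

Lemma sumR_map_eq0 (f : nat -> R) l : (forall k, In k l -> f k = 0) -> sumR (map f l) = 0.
Proof.
  induction l as [|x l IH]; intro Hf; simpl; [reflexivity|].
  rewrite Hf, IH; [lra | intros k Hk; apply Hf; right; exact Hk | left; reflexivity].
Qed.

Lemma sumR_seq0 (f : nat -> R) m : sumR (map f (seq 0 (S m))) = sum_f_R0 f m.
Proof.
  induction m as [|m IH]; [simpl; lra|].
  rewrite seq_S, map_app, sumR_app, IH. simpl. lra.
Qed.

Lemma decr_rearr_ge0 p r : (forall k, 0 <= p k) -> decr_rearr p r -> forall i, 0 <= r i.
Proof. intros Hp [_ [sigma [_ [Hr _]]]] i. rewrite Hr. apply Hp. Qed.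

Lemma decr_rearr_head_max p r : decr_rearr p r -> forall k, p k <= r O.
Proof.
  intros [Hdec [sigma [_ [Hr Hrest]]]] k.
  assert (Hle0 : forall i, r i <= r O).
  { induction i as [|i IH]; [lra|]. specialize (Hdec i). lra. }
  destruct (classic (exists i, sigma i = k)) as [[i <-]|Hk].
  - rewrite <- Hr. apply Hle0.
  - apply Hrest. intros i Hi. apply Hk. eauto.
Qed.

Lemma decr_rearr_behead p r : (forall k, 0 <= p k) -> decr_rearr p r ->
  exists k, r O = p k /\
    decr_rearr (fun j => if Nat.eqb j k then 0 else p j) (fun i => r (S i)).
Proof.
  intros Hp Hr. pose proof (decr_rearr_ge0 p r Hp Hr) as Hr0.
  destruct Hr as [Hdec [sigma [Hinj [Hr Hrest]]]].
  exists (sigma O). split; [apply Hr|]. split; [intro i; apply Hdec|].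
  exists (fun i => sigma (S i)). split; [|split].
  - intros i j E. apply Hinj in E. congruence.
  - intro i. destruct (Nat.eqb_spec (sigma (S i)) (sigma O)) as [E|_].
    + apply Hinj in E. discriminate.
    + apply Hr.
  - intros k Hk i. destruct (Nat.eqb_spec k (sigma O)); [apply Hr0|].
    apply Hrest. intros [|j] E; [congruence|]. exact (Hk j E).
Qed.

Lemma sumR_distinct_le_decr_rearr : forall n p r l, (forall k, 0 <= p k) ->
  decr_rearr p r -> NoDup l -> (length l <= n)%nat ->
  sumR (map p l) <= sumR (map r (seq 0 n)).
Proof.
  induction n as [|n IH]; intros p r l Hp Hr Hl Hlen.
  { destruct l; simpl in *; [lra|lia]. }
  pose proof (decr_rearr_head_max p r Hr) as Hhead.
  pose proof (decr_rearr_ge0 p r Hp Hr) as Hr0.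
  destruct (decr_rearr_behead p r Hp Hr) as [k [Hk Hr']].
  set (p' := fun j => if Nat.eqb j k then 0 else p j) in Hr'.
  assert (Hp' : forall j, 0 <= p' j).
  { intro j. unfold p'. destruct (Nat.eqb j k); [lra|apply Hp]. }
  assert (Hagree : forall l', ~ In k l' -> map p l' = map p' l').
  { intros l' Hl'. apply map_ext_in. intros j Hj. unfold p'.
    destruct (Nat.eqb_spec j k); [subst; contradiction|reflexivity]. }
  assert (Htail : sumR (map r (seq 0 (S n))) = r O + sumR (map (fun i => r (S i)) (seq 0 n))).
  { simpl. rewrite <- seq_shift, map_map. reflexivity. }
  rewrite Htail.
  (* Either the largest entry [p k] occurs in [l] and is removed, or the head of [l]
     is bounded by it. *)
  destruct (classic (In k l)) as [Hin|Hin].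
  - destruct (in_split _ _ Hin) as [l1 [l2 ->]].
    destruct (NoDup_remove _ _ _ Hl) as [Hl' Hnot].
    rewrite length_app in Hlen. simpl in Hlen.
    specialize (IH p' _ (l1 ++ l2) Hp' Hr' Hl' ltac:(rewrite length_app; lia)).
    rewrite <- Hagree in IH by exact Hnot.
    rewrite map_app, sumR_app in *. simpl. lra.
  - destruct l as [|x l]; simpl.
    + pose proof (sumR_map_ge0 (fun i => r (S i)) (seq 0 n) (fun i => Hr0 (S i))).
      specialize (Hr0 O). lra.
    + inversion Hl as [|? ? _ Hl']; subst. simpl in Hlen.
      specialize (IH p' _ l Hp' Hr' Hl' ltac:(lia)).
      rewrite <- Hagree in IH by (intro; apply Hin; right; assumption).
      specialize (Hhead x). lra.
Qed.

Lemma decr_rearr_prefix p r m : decr_rearr p r ->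
  exists l, NoDup l /\ length l = S m /\ sum_f_R0 r m = sumR (map p l).
Proof.
  intros [_ [sigma [Hinj [Hr _]]]]. exists (map sigma (seq 0 (S m))). split; [|split].
  - apply Injective_map_NoDup; [exact Hinj|apply seq_NoDup].
  - rewrite length_map, length_seq. reflexivity.
  - rewrite <- sumR_seq0, map_map. f_equal. apply map_ext. exact Hr.
Qed.

Lemma decr_rearr_partial_sum_eq p r r' m : (forall k, 0 <= p k) ->
  decr_rearr p r -> decr_rearr p r' -> sum_f_R0 r m = sum_f_R0 r' m.
Proof.
  intro Hp.
  assert (Hle : forall r r', decr_rearr p r -> decr_rearr p r' -> sum_f_R0 r m <= sum_f_R0 r' m).
  { intros r1 r2 Hr1 Hr2. destruct (decr_rearr_prefix p r1 m Hr1) as [l [Hl [Hlen ->]]].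
    rewrite <- sumR_seq0. apply sumR_distinct_le_decr_rearr; auto. lia. }
  intros Hr Hr'. apply Rle_antisym; auto.
Qed.

Section GreedyRearrangement.

Variables (p : nat -> R) (M : nat).
Hypothesis p_incr : forall k, (0 < k)%nat -> (k <= M)%nat -> p (k - 1)%nat <= p k.
Hypothesis p_decr : forall k, (M <= k)%nat -> p (S k) <= p k.

Lemma p_le_left k j : (k <= j)%nat -> (j <= M)%nat -> p k <= p j.
Proof.
  induction 1 as [|j ? IH]; intro Hj; [lra|].
  specialize (p_incr (S j) ltac:(lia) Hj). rewrite Nat.sub_1_r in p_incr.
  specialize (IH ltac:(lia)). simpl in p_incr. lra.
Qed.

Lemma p_le_right j k : (j <= k)%nat -> (M <= j)%nat -> p k <= p j.
Proof.
  induction 1 as [|k ? IH]; intro Hj; [lra|].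
  specialize (p_decr k ltac:(lia)). specialize (IH Hj). lra.
Qed.

(* The window [lo, hi) grows by its larger neighbour, the left one on ties. *)
Definition go_left (lo hi : nat) : bool :=
  match lo with O => false | S l => if Rle_dec (p hi) (p l) then true else false end.

Inductive go_left_spec (lo hi : nat) : bool -> Prop :=
  | GoLeft l : lo = S l -> p hi <= p l -> go_left_spec lo hi true
  | GoRight : (forall l, lo = S l -> p l < p hi) -> go_left_spec lo hi false.

Lemma go_leftP lo hi : go_left_spec lo hi (go_left lo hi).
Proof.
  destruct lo as [|l]; simpl; [constructor; discriminate|].
  destruct (Rle_dec (p hi) (p l)); [econstructor; eauto|].
  constructor. intros l' E. injection E as <-. lra.
Qed.

Fixpoint frame (i : nat) : nat * nat :=
  match i with
  | O => (M, M)
  | S i => let (lo, hi) := frame i in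
           if go_left lo hi then (pred lo, hi) else (lo, S hi)
  end.

Definition lo i := fst (frame i).
Definition hi i := snd (frame i).
Definition next i := if go_left (lo i) (hi i) then pred (lo i) else hi i.
Definition greedy i := p (next i).

Lemma lo_S i : lo (S i) = if go_left (lo i) (hi i) then pred (lo i) else lo i.
Proof. unfold lo, hi; simpl. destruct (frame i), (go_left _ _); reflexivity. Qed.

Lemma hi_S i : hi (S i) = if go_left (lo i) (hi i) then hi i else S (hi i).
Proof. unfold lo, hi; simpl. destruct (frame i), (go_left _ _); reflexivity. Qed.

Lemma frame_size i : (lo i <= M <= hi i)%nat /\ hi i = (lo i + i)%nat.
Proof.
  induction i as [|i IH]; [unfold lo, hi; simpl; lia|].
  rewrite lo_S, hi_S. destruct (go_leftP (lo i) (hi i)) as [l Hl _|_]; [|lia].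
  rewrite Hl in *. simpl. lia.
Qed.

Lemma frame_grows i : (lo (S i) <= lo i)%nat /\ (hi i <= hi (S i))%nat.
Proof. rewrite lo_S, hi_S. destruct (go_left _ _); lia. Qed.

Lemma next_outside i : (next i < lo i)%nat \/ (hi i <= next i)%nat.
Proof.
  unfold next. destruct (go_leftP (lo i) (hi i)) as [l Hl _|_]; [|lia].
  rewrite Hl. simpl. lia.
Qed.

Lemma next_inside i j : (j < i)%nat -> (lo i <= next j < hi i)%nat.
Proof.
  induction i as [|i IH]; intro Hj; [lia|].
  destruct (frame_grows i).
  destruct (Nat.eq_dec j i) as [->|Hne]; [|specialize (IH ltac:(lia)); lia].
  destruct (frame_size i) as [_ Hsize].
  unfold next. rewrite lo_S, hi_S.
  destruct (go_leftP (lo i) (hi i)) as [l Hl _|_]; [rewrite Hl in *; simpl|]; lia.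
Qed.

Lemma next_inj i j : next i = next j -> i = j.
Proof.
  intro E. destruct (Nat.lt_trichotomy i j) as [H|[H|H]]; auto.
  - pose proof (next_inside j i H). pose proof (next_outside j). lia.
  - pose proof (next_inside i j H). pose proof (next_outside i). lia.
Qed.

Lemma frame_covered i k : (lo i <= k < hi i)%nat -> exists j, (j < i)%nat /\ next j = k.
Proof.
  induction i as [|i IH]; intro Hk; [unfold lo, hi in Hk; simpl in Hk; lia|].
  rewrite lo_S, hi_S in Hk.
  assert (Hnext : next i = if go_left (lo i) (hi i) then pred (lo i) else hi i) by reflexivity.
  destruct (go_leftP (lo i) (hi i)) as [l Hl _|_].
  - rewrite Hl in Hk, Hnext. simpl in Hk, Hnext.
    destruct (Nat.eq_dec k l) as [->|Hne]; [exists i; split; auto|].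
    destruct (IH ltac:(lia)) as [j [Hj Ej]]. exists j; split; auto.
  - destruct (Nat.eq_dec k (hi i)) as [->|Hne]; [exists i; split; auto|].
    destruct (IH ltac:(lia)) as [j [Hj Ej]]. exists j; split; auto.
Qed.

Lemma outside_le_greedy i k : (k < lo i \/ hi i <= k)%nat -> p k <= greedy i.
Proof.
  destruct (frame_size i) as [Hframe _]. unfold greedy, next. intro Hk.
  destruct (go_leftP (lo i) (hi i)) as [l Hl Hle|Hlt].
  - rewrite Hl in *. simpl. destruct Hk as [Hk|Hk].
    + apply p_le_left; lia.
    + pose proof (p_le_right (hi i) k ltac:(lia) ltac:(lia)). lra.
  - destruct Hk as [Hk|Hk].
    + destruct (lo i) as [|l] eqn:Hl; [lia|].
      specialize (Hlt l eq_refl). pose proof (p_le_left k l ltac:(lia) ltac:(lia)). lra.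
    + apply p_le_right; lia.
Qed.

Lemma greedy_decr_rearr : decr_rearr p greedy.
Proof.
  split; [intro i; apply outside_le_greedy; destruct (frame_grows i);
          destruct (next_outside (S i)); lia|].
  exists next. split; [exact next_inj|split; [reflexivity|]].
  intros k Hk i. apply outside_le_greedy.
  destruct (Nat.lt_ge_cases k (lo i)); [auto|].
  destruct (Nat.lt_ge_cases k (hi i)); [|auto].
  destruct (frame_covered i k ltac:(lia)) as [j [_ Hj]]. exfalso. exact (Hk j Hj).
Qed.

Lemma greedy_sum_window i : sumR (map greedy (seq 0 i)) = sumR (map p (seq (lo i) i)).
Proof.
  induction i as [|i IH]; [reflexivity|].
  rewrite seq_S, map_app, sumR_app, IH. simpl (sumR (map greedy _)).
  destruct (frame_size i) as [_ Hsize].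
  unfold greedy, next. rewrite lo_S.
  destruct (go_leftP (lo i) (hi i)) as [l Hl _|_].
  - rewrite Hl. simpl. lra.
  - rewrite (seq_S i), map_app, sumR_app, <- Hsize. simpl. lra.
Qed.

End GreedyRearrangement.

Lemma unimodal_window_rearr p : unimodal p -> exists r, decr_rearr p r /\
  forall m, exists a, sum_f_R0 r m = sumR (map p (seq a (S m))).
Proof.
  intros [M [Hincr Hdecr]]. exists (greedy p M). split.
  - apply greedy_decr_rearr; assumption.
  - intro m. exists (lo p M (S m)). rewrite <- sumR_seq0. apply greedy_sum_window.
Qed.

Lemma is_series_finite_support (f : nat -> R) N : (forall k, (N <= k)%nat -> f k = 0) ->
  is_series f (sumR (map f (seq 0 N))).
Proof.
  intro Hf.
  enough (Hlim : is_lim_seq (sum_n f) (sumR (map f (seq 0 N)))) by exact Hlim.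
  apply (is_lim_seq_ext_loc (fun _ => sumR (map f (seq 0 N)))); [|apply is_lim_seq_const].
  exists N. intros n Hn. rewrite sum_n_Reals, <- sumR_seq0.
  replace (S n) with (N + (S n - N))%nat by lia.
  rewrite seq_app, map_app, sumR_app, (sumR_map_eq0 f (seq (0 + N) _)); [lra|].
  intros k Hk. apply Hf. apply in_seq in Hk. lia.
Qed.

Definition window (p : nat -> R) (a n k : nat) : R :=
  if (Nat.leb a k && Nat.ltb k (a + n))%bool then p k else 0.

Lemma window_in p a n k : (a <= k < a + n)%nat -> window p a n k = p k.
Proof.
  intros [H1 H2]. unfold window.
  rewrite (proj2 (Nat.leb_le _ _) H1), (proj2 (Nat.ltb_lt _ _) H2). reflexivity.
Qed.

Lemma window_out p a n k : ~ (a <= k < a + n)%nat -> window p a n k = 0.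
Proof.
  intro Hk. unfold window.
  destruct (Nat.leb_spec a k), (Nat.ltb_spec k (a + n)); [lia|reflexivity..].
Qed.

Lemma is_series_window p a n : is_series (window p a n) (sumR (map p (seq a n))).
Proof.
  replace (sumR (map p (seq a n))) with (sumR (map (window p a n) (seq 0 (a + n)))).
  - apply is_series_finite_support. intros k Hk. apply window_out. lia.
  - rewrite seq_app, map_app, sumR_app, sumR_map_eq0, Rplus_0_l.
    + f_equal. apply map_ext_in. intros k Hk. apply window_in, in_seq, Hk.
    + intros k Hk. apply in_seq in Hk. apply window_out. lia.
Qed.

Lemma nat_ceil (x : R) : exists a : nat, x <= INR a /\ forall k : nat, x <= INR k -> (a <= k)%nat.
Proof.
  destruct (Zceil_bound x) as [Hlo Hhi]. exists (Z.to_nat (Zceil x)). split.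
  - rewrite INR_IZR_INZ. apply Rle_trans with (1 := Hhi). apply IZR_le. lia.
  - intros k Hk. rewrite INR_IZR_INZ in Hk.
    assert (Hlt : IZR (Zceil x) < IZR (Z.of_nat k + 1)) by (rewrite plus_IZR; lra).
    apply lt_IZR in Hlt. lia.
Qed.

Lemma prob_interval_le_window p x0 eps m : (forall k, 0 <= p k) -> eps < INR m + 1 ->
  exists a, prob_interval p x0 (x0 + eps) <= sumR (map p (seq a (S m))).
Proof.
  intros Hp Heps. destruct (nat_ceil x0) as [a [Ha Hmin]]. exists a.
  assert (Hin : forall k, x0 <= INR k -> INR k <= x0 + eps -> (a <= k < a + S m)%nat).
  { intros k H1 H2. split; [exact (Hmin k H1)|].
    apply INR_lt. rewrite plus_INR, S_INR. lra. }
  rewrite <- (is_series_unique _ _ (is_series_window p a (S m))).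
  apply Series_le; [|eexists; apply is_series_window].
  intro k. assert (Hwin : 0 <= window p a (S m) k).
  { unfold window. destruct (_ && _)%bool; [apply Hp|lra]. }
  destruct (Rle_dec x0 (INR k)) as [H1|]; [destruct (Rle_dec (INR k) (x0 + eps)) as [H2|]|];
    [|lra..].
  rewrite window_in by exact (Hin k H1 H2). split; [apply Hp|lra].
Qed.

Lemma prob_interval_window p a eps m : INR m <= eps < INR m + 1 ->
  prob_interval p (INR a) (INR a + eps) = sumR (map p (seq a (S m))).
Proof.
  intro Heps. apply is_series_unique.
  apply is_series_ext with (window p a (S m)); [|apply is_series_window].
  intro k.
  assert (Hin : INR a <= INR k <= INR a + eps <-> (a <= k < a + S m)%nat).
  { split.
    - intros [H1 H2]. apply INR_le in H1. split; [exact H1|].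
      apply INR_lt. rewrite plus_INR, S_INR. lra.
    - intros [H1 H2]. apply le_INR in H1. assert (H3 : (k <= a + m)%nat) by lia.
      apply le_INR in H3. rewrite plus_INR in H3. split; lra. }
  destruct (Rle_dec (INR a) (INR k)) as [H1|H1];
    [destruct (Rle_dec (INR k) (INR a + eps)) as [H2|H2]|].
  - apply window_in, Hin. split; assumption.
  - apply window_out. rewrite <- Hin. tauto.
  - apply window_out. rewrite <- Hin. tauto.
Qed.

Lemma concentration_unimodal p r m eps : (forall k, 0 <= p k) -> unimodal p ->
  decr_rearr p r -> INR m <= eps < INR m + 1 ->
  concentration p eps = Finite (sum_f_R0 r m).
Proof.
  intros Hp Hunimodal Hr Heps.
  destruct (unimodal_window_rearr p Hunimodal) as [g [Hg Hwindow]].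
  apply is_lub_Rbar_unique. split.
  - intros y [x0 ->]. simpl.
    destruct (prob_interval_le_window p x0 eps m Hp (proj2 Heps)) as [a Ha].
    apply (Rle_trans _ _ _ Ha). rewrite <- sumR_seq0.
    apply sumR_distinct_le_decr_rearr; [exact Hp|exact Hr|apply seq_NoDup|].
    rewrite length_seq. lia.
  - intros b Hb. destruct (Hwindow m) as [a Ha].
    rewrite (decr_rearr_partial_sum_eq p r g m Hp Hr Hg), Ha.
    rewrite <- (prob_interval_window p a eps m Heps). apply Hb. eexists; reflexivity.
Qed.

Theorem proposition5p1 (p q : nat -> R) :
  prob_dist p -> prob_dist q -> unimodal p -> unimodal q ->
  (le_wd p q <-> le_rand p q).
Proof.
  intros [Hp _] [Hq _] Up Uq. split.
  - intros Hwd rp rq Hrp Hrq m.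
    assert (Heps : INR m <= INR m + /2 < INR m + 1) by lra.
    specialize (Hwd (INR m + /2) ltac:(pose proof (pos_INR m); lra)).
    rewrite (concentration_unimodal p rp m _ Hp Up Hrp Heps),
            (concentration_unimodal q rq m _ Hq Uq Hrq Heps) in Hwd.
    exact Hwd.
  - intros Hrand eps Heps.
    destruct (unimodal_window_rearr p Up) as [rp [Hrp _]].
    destruct (unimodal_window_rearr q Uq) as [rq [Hrq _]].
    destruct (nfloor_ex eps ltac:(lra)) as [m Hm].
    rewrite (concentration_unimodal p rp m _ Hp Up Hrp Hm),
            (concentration_unimodal q rq m _ Hq Uq Hrq Hm).
    apply Hrand; assumption.
Qed.
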